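(* Let $\mathcal{X}$ be a finite set and $\underline{Q}$ a lower transition rate operator on $\mathcal{L}(\mathcal{X})$. Then for all $A\subseteq\mathcal{X}$, all $x\in\mathcal{X}$ and all $t,s>0$: (1) if $x\in A$ then $\underline{T}_t\mathbb{I}_A(x)>0$; and $\underline{T}_t\mathbb{I}_A(x)>0\iff\underline{T}_s\mathbb{I}_A(x)>0$; (2) if $x\notin A$ then $\underline{T}_t\mathbb{I}_A(x)<1$; and $\underline{T}_t\mathbb{I}_A(x)<1\iff\underline{T}_s\mathbb{I}_A(x)<1$; (3) if $x\in A$ then $\overline{T}_t\mathbb{I}_A(x)>0$; and $\overline{T}_t\mathbb{I}_A(x)>0\iff\overline{T}_s\mathbb{I}_A(x)>0$; (4) if $x\notin A$ then $\overline{T}_t\mathbb{I}_A(x)<1$; and $\overline{T}_t\mathbb{I}_A(x)<1\iff\overline{T}_s\mathbb{I}_A(x)<1$.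
   Context: $\mathcal{L}(\mathcal{X})$ is the set of real-valued functions on $\mathcal{X}$ with pointwise operations and order, real constants identified with constant functions, $\mathbb{I}_A$ the indicator of $A$, $\mathbb{I}_y\coloneqq\mathbb{I}_{\{y\}}$. A lower transition rate operator is a map $\underline{Q}\colon\mathcal{L}(\mathcal{X})\to\mathcal{L}(\mathcal{X})$ such that for all $f,g$, $\lambda\ge0$, $\mu\in\mathbb{R}$, $x,y\in\mathcal{X}$: $\underline{Q}(\mu)=0$; $\underline{Q}(f+g)\ge\underline{Q}f+\underline{Q}g$; $\underline{Q}(\lambda f)=\lambda\underline{Q}f$; $x\ne y\Rightarrow\underline{Q}(\mathbb{I}_y)(x)\ge0$. For each $f$, $t\mapsto\underline{T}_tf$ is the unique solution on $[0,\infty)$ of $\frac{d}{dt}\underline{T}_tf=\underline{Q}\,\underline{T}_tf$ with $\underline{T}_0f=f$ (existence and uniqueness are known), and $\overline{T}_tf\coloneqq-\underline{T}_t(-f)$. *)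

From HB Require Import structures.
From mathcomp Require Import all_boot all_order all_algebra.
From mathcomp Require Import all_classical all_reals all_analysis.
Set Implicit Arguments. Unset Strict Implicit. Unset Printing Implicit Defensive.
Import Order.TTheory GRing.Theory Num.Theory.
Import numFieldNormedType.Exports.
Local Open Scope ring_scope.
Local Open Scope classical_set_scope.

Definition ind (R : realType) (X : finType) (A : {set X}) : X -> R :=
  fun z => if z \in A then 1 else 0.

Arguments ind R {X} A.

Definition lower_rate_op (R : realType) (X : finType)
    (Q : (X -> R) -> (X -> R)) : Prop :=
  [/\ (forall mu : R, Q (fun _ => mu) = (fun _ => 0)),
      (forall (f g : X -> R) (x : X), Q f x + Q g x <= Q (fun y => f y + g y) x),
      (forall (l : R) (f : X -> R), 0 <= l ->
          Q (fun y => l * f y) = (fun y => l * Q f y)) &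
      (forall x y : X, x != y -> 0 <= Q (ind R [set y]) x)].

(* T is the lower transition operator semigroup generated by Q:
   for every f, t |-> T t f is the solution on [0, +oo) of
   d/dt T_t f = Q (T_t f), T_0 f = f  (componentwise, X finite;
   at t = 0 the derivative is the right derivative).
   Values of T at negative times are irrelevant. *)
Definition lower_semigroup (R : realType) (X : finType)
    (Q : (X -> R) -> (X -> R)) (T : R -> (X -> R) -> (X -> R)) : Prop :=
  forall f : X -> R,
    [/\ T 0 f = f,
        (forall (x : X) (t : R), 0 < t ->
           derivable (fun u => T u f x) t 1 /\
           'D_1 (fun u => T u f x) t = Q (T t f) x) &
        (forall x : X,
           (fun h : R => h^-1 * (T h f x - f x)) @ 0^'+ --> Q (T 0 f) x)].

Definition upper_of (R : realType) (X : finType)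
    (T : R -> (X -> R) -> (X -> R)) (t : R) (f : X -> R) : X -> R :=
  fun x => - T t (fun y => - f y) x.

From HB Require Import structures.
From mathcomp Require Import all_boot all_order all_algebra.
From mathcomp Require Import all_classical all_reals all_analysis.
From mathcomp Require Import ring lra.
Import Order.TTheory GRing.Theory Num.Theory.
Import numFieldNormedType.Exports.
Set Implicit Arguments. Unset Strict Implicit. Unset Printing Implicit Defensive.
Local Open Scope ring_scope.
Local Open Scope classical_set_scope.

(* Each of T_t I_A, 1 - T_t I_A, Tbar_t I_A and 1 - Tbar_t I_A solves u' = P u
   from an initial value in [0, 1], for an operator P that is invariant under
   adding constants, positively homogeneous, and satisfies the positive maximum
   principle (g <= h with g x = h x implies P g x <= P h x).  Lower rate
   operators have these properties, and unlike them the class is closed under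
   P |-> -P(-.), so one argument covers all four claims.
   For such P, a stationary supersolution w (P w <= 0) lying above u at some
   time stays above it: at the first time u reaches w + e (s - t0 + 1), the
   touching coordinate would grow at rate e although P u <= P w <= 0 there.
   Comparing with 0 gives u >= 0.  Positivity at x persists, since
   u' x >= P(I_x)(x) u x gives an exponential lower bound.  A zero at x
   persists, since M times the indicator of the support of u_a is a stationary
   supersolution above u_a.  So the set where u_t > 0 does not depend on t > 0,
   and it contains the set where u_0 > 0 by right continuity at 0. *)

Section RateLike.
Variables (R : realType) (X : finType).
Implicit Types (P : (X -> R) -> X -> R) (g h : X -> R).

Record rate_like P : Prop := RateLike {
  rate_shift : forall g mu x, P (fun y => g y + mu) x = P g x;
  rate_max_principle : forall g h x,
    (forall y, g y <= h y) -> g x = h x -> P g x <= P h x;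
  rate_homo : forall l g x, 0 <= l -> P (fun y => l * g y) x = l * P g x }.

Definition conj_op P : (X -> R) -> X -> R := fun g x => - P (fun y => - g y) x.

Lemma rate_like_conj P : rate_like P -> rate_like (conj_op P).
Proof.
case=> Ps Pm Ph; split => [g mu x|g h x gh gx|l g x l0]; rewrite /conj_op.
- rewrite -(Ps (fun y => - (g y + mu)) mu); congr (- P _ x).
  by apply: funext => y; rewrite opprD addrNK.
- by rewrite lerN2; apply: Pm => [y|]; rewrite ?lerN2 ?gx.
- rewrite mulrN -Ph //; congr (- P _ x).
  by apply: funext => y; rewrite mulrN.
Qed.

Lemma rate_like_cst P mu x : rate_like P -> P (fun _ => mu) x = 0.
Proof.
case=> Ps _ Ph.
have -> : (fun _ : X => mu) = (fun y => (fun _ => 0 * 0) y + mu).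
  by apply: funext => y; rewrite mulr0 add0r.
by rewrite Ps (Ph 0 (fun _ => 0)) // mul0r.
Qed.

Lemma rate_like_ge_diag P g x : rate_like P -> (forall y, 0 <= g y) ->
  g x * P (ind R [set x]) x <= P g x.
Proof.
case=> _ Pm Ph g0; rewrite -Ph //; apply: Pm => [y|]; rewrite /ind inE.
  by case: eqP => [->|_]; rewrite ?mulr1 ?mulr0.
by rewrite eqxx mulr1.
Qed.

Lemma rate_like_support_le0 P g y : rate_like P -> (forall z, 0 <= g z) ->
  (g y = 0 -> P g y <= 0) -> P (ind R [set z | g z != 0]) y <= 0.
Proof.
move=> GP g0 Pg; have [_ Pm Ph] := GP; set c := ind R _.
have [gy|gy] := eqVneq (g y) 0.
  pose m := \big[Order.min/1]_(z | g z != 0) g z.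
  have m0 : 0 < m by apply: lt_bigmin => // z gz; rewrite lt_def gz g0.
  rewrite -(pmulr_rle0 _ m0) -Ph; last exact: ltW.
  apply: le_trans (Pg gy).
  apply: Pm => [z|]; rewrite /c /ind inE; last by rewrite gy eqxx mulr0.
  case: ifP => gz; last by rewrite mulr0.
  by rewrite mulr1 bigmin_le_cond ?gz.
apply: le_trans (_ : P (fun _ => 1) y <= 0); last by rewrite rate_like_cst.
by apply: Pm => [z|]; rewrite /c /ind inE ?gy //; case: ifP.
Qed.

End RateLike.

Section LowerRateOperator.
Variables (R : realType) (X : finType) (Q : (X -> R) -> X -> R).
Hypothesis HQ : lower_rate_op Q.

Lemma lower_rate_op_sum (s : seq X) (F : X -> X -> R) x :
  \sum_(y <- s) Q (F y) x <= Q (fun z => \sum_(y <- s) F y z) x.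
Proof.
case: HQ => Q0 Qa _ _; elim: s => [|a s IH].
  have -> : (fun z => \sum_(y <- [::]) F y z) = (fun _ => 0).
    by apply: funext => z; rewrite big_nil.
  by rewrite big_nil Q0.
have -> : (fun z => \sum_(y <- a :: s) F y z) =
          (fun z => F a z + (fun z => \sum_(y <- s) F y z) z).
  by apply: funext => z; rewrite big_cons.
by rewrite big_cons; apply: le_trans (Qa _ _ _); rewrite lerD2l.
Qed.

Lemma lower_rate_op_shift g mu x : Q (fun y => g y + mu) x = Q g x.
Proof.
case: HQ => Q0 Qa _ _; apply/eqP; rewrite eq_le; apply/andP; split.
  have {2}-> : g = (fun y => (fun y => g y + mu) y + (fun _ => - mu) y).
    by apply: funext => y; rewrite addrK.
  by apply: le_trans (Qa _ _ _); rewrite Q0 addr0.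
by apply: le_trans (Qa _ _ _); rewrite Q0 addr0.
Qed.

Lemma lower_rate_op_ge0 d x : (forall y, 0 <= d y) -> d x = 0 -> 0 <= Q d x.
Proof.
case: HQ => _ _ Qh Qp d0 dx.
have -> : d = (fun z => \sum_(y <- enum X) d y * ind R [set y] z).
  apply: funext => z; rewrite big_enum (bigD1 z) //= big1 ?addr0.
    by rewrite /ind inE eqxx mulr1.
  by move=> y yz; rewrite /ind inE eq_sym (negbTE yz) mulr0.
apply: le_trans (lower_rate_op_sum _ _ _); apply: sumr_ge0 => y _.
rewrite Qh //; have [<-|xy] := eqVneq x y; first by rewrite dx mul0r.
exact: mulr_ge0 (Qp _ _ xy).
Qed.

Lemma rate_like_lower_rate_op : rate_like Q.
Proof.
split => [|g h x gh gx|l g x l0]; first exact: lower_rate_op_shift.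
  have -> : h = (fun y => g y + (h y - g y)) by apply: funext => y; rewrite addrC subrK.
  case: HQ => _ Qa _ _; apply: le_trans (Qa _ _ _); rewrite lerDl.
  by apply: lower_rate_op_ge0 => [y|]; rewrite ?subr_ge0 ?gx ?subrr.
by case: HQ => _ _ Qh _; rewrite Qh.
Qed.

End LowerRateOperator.

Section RealAnalysis.
Variable R : realType.
Implicit Types (a b c r : R) (g v : R -> R).

Lemma derive1_at_left g a : derivable g a 1 ->
  (fun h => h^-1 * (g (h + a) - g a)) @ 0^'- --> 'D_1 g a.
Proof.
move=> dg; have -> : (fun h => h^-1 * (g (h + a) - g a)) =
    (fun h => h^-1 *: ((g \o shift a) (h *: 1) - g a)).
  by apply: funext => h /=; rewrite [h *: 1]mulr1.
apply: cvg_trans dg; apply: cvg_fmap2; apply: within_subset => h /= h0.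
exact: ltr0_neq0.
Qed.

Lemma derive1_ge_at_left g a c : derivable g a 1 ->
  (\forall h \near 0^'-, g (h + a) - g a <= c * h) -> c <= 'D_1 g a.
Proof.
move=> dg gc; apply: (closed_cvg _ (@closed_ge _ c) _ _ (derive1_at_left dg)).
near=> h; have h0 : h < 0 by near: h; exact: nbhs_left_lt.
by rewrite /= mulrC ler_ndivlMr //; near: h.
Unshelve. all: by end_near. Qed.

Lemma derive1_le_at_left g a c : derivable g a 1 ->
  (\forall h \near 0^'-, c * h <= g (h + a) - g a) -> 'D_1 g a <= c.
Proof.
move=> dg gc; apply: (closed_cvg _ (@closed_le _ c) _ _ (derive1_at_left dg)).
near=> h; have h0 : h < 0 by near: h; exact: nbhs_left_lt.
by rewrite /= mulrC ler_ndivrMr //; near: h.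
Unshelve. all: by end_near. Qed.

Lemma is_derive_expRM c r :
  is_derive r 1 (fun s => expR (c * s)) (c * expR (c * r)).
Proof.
have dc : is_derive r 1 (fun s : R => c * s) c.
  by apply: is_derive_eq; exact: mulr1.
by have := is_derive1_comp (is_derive_expR (c * r)) dc; rewrite mulrC.
Qed.

Lemma derive1_ge_mul_gt0 v c a b : a <= b ->
  (forall r, a <= r <= b -> derivable v r 1) ->
  (forall r, a < r < b -> c * v r <= 'D_1 v r) -> 0 < v a -> 0 < v b.
Proof.
move=> ab dv Dv va.
pose F := (fun s => expR (- c * s)) * v.
have dF r : a <= r <= b ->
    derivable F r 1 /\ 'D_1 F r = expR (- c * r) * ('D_1 v r - c * v r).
  move=> /dv/derivableP dvr.
  have FE : is_derive r 1 F (expR (- c * r) * ('D_1 v r - c * v r)).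
    apply: is_derive_eq (is_deriveM (is_derive_expRM (- c) r) dvr) _.
    by rewrite /GRing.scale /=; ring.
  by case: FE.
have : F a <= F b.
  apply: (@ger0_derive1_ndecr _ F a b) => // [r|r|].
  - by rewrite in_itv /= => /andP[ar rb]; apply: (dF r _).1; rewrite !ltW.
  - rewrite in_itv /= => /andP[ar rb].
    rewrite derive1E (dF r _).2; last by rewrite !ltW.
    by rewrite mulr_ge0 ?expR_ge0 // subr_ge0 Dv ?ar.
  - apply: derivable_within_continuous => r; rewrite in_itv /= => rab.
    exact: (dF r rab).1.
have Fa : 0 < F a by rewrite /F /= mulr_gt0 ?expR_gt0.
by move=> /(lt_le_trans Fa); rewrite /F /= pmulr_rgt0 ?expR_gt0.
Qed.

Lemma inf_mem_of_right_open (S : set R) : has_inf S ->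
  (~ S (inf S) -> \forall s \near (inf S)^'+, ~ S s) -> S (inf S).
Proof.
move=> [S0 lbS] openS; apply: contrapT => nS.
have /nbhs_ballP[eta eta0 nearS] := openS nS.
have [s Ss s_lt] := inf_adherent eta0 (conj S0 lbS).
have : inf S < s.
  rewrite lt_neqAle ge_inf // andbT.
  by apply/eqP => infE; apply: nS; rewrite infE.
move=> inf_s; apply: (nearS s _ inf_s Ss).
by rewrite /ball /= distrC gtr0_norm ?subr_gt0 // ltrBlDl.
Qed.

Lemma first_crossing (I : finType) (g : I -> R -> R) (t0 r : R) :
  (forall i s, t0 <= s -> g i @ s^'+ --> g i s) ->
  (forall i s, t0 < s -> g i @ s^'- --> g i s) ->
  (forall i, g i t0 < 0) -> t0 <= r -> (exists i, 0 <= g i r) ->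
  exists tau i0, [/\ t0 < tau, g i0 tau = 0, (forall i, g i tau <= 0) &
                     (forall i s, t0 <= s < tau -> g i s < 0)].
Proof.
move=> rc lc g0 t0r [i1 gi1].
pose S := [set s | t0 <= s /\ exists i, 0 <= g i s].
have Sr : S r by split; last exists i1.
have lbS : has_lbound S by exists t0 => s [].
pose tau := inf S.
have t0tau : t0 <= tau by apply: lb_le_inf; [exists r | move=> s []].
have before i s : t0 <= s < tau -> g i s < 0.
  case/andP=> t0s stau; rewrite ltNge; apply/negP => gis.
  by have := ge_inf lbS (conj t0s (ex_intro _ i gis)); rewrite leNgt stau.
have [_ [i0 gi0]] : S tau.
  apply: inf_mem_of_right_open; first by split; [exists r | ].
  move=> nS; have neg i : g i tau < 0.
    by rewrite ltNge; apply/negP => gi; apply: nS; split; last exists i.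
  have : \forall s \near tau^'+, forall i, g i s < 0.
    by apply: filter_forall => i; exact: cvgr_lt (rc i tau t0tau) _ (neg i).
  by apply: filterS => s gs [_ [i]]; rewrite leNgt gs.
have t0_lt_tau : t0 < tau.
  rewrite lt_neqAle t0tau andbT; apply/eqP => t0E.
  by have := g0 i0; rewrite t0E ltNge gi0.
have below i : g i tau <= 0.
  apply: (closed_cvg _ (@closed_le _ 0) _ _ (lc i tau t0_lt_tau)).
  near=> s; apply/ltW/before; apply/andP; split; near: s.
    exact: nbhs_left_ge.
  exact: nbhs_left_lt.
exists tau, i0; split => //.
by apply/eqP; rewrite eq_le gi0 below.
Unshelve. all: by end_near. Qed.

End RealAnalysis.

Section Solutions.
Variables (R : realType) (X : finType).
Implicit Types (P : (X -> R) -> X -> R) (u : R -> X -> R) (f w : X -> R).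
Implicit Types (c e r s t : R).

Definition solution P u f : Prop :=
  [/\ u 0 = f,
      (forall x t, 0 < t -> derivable (fun r => u r x) t 1 /\
                            'D_1 (fun r => u r x) t = P (u t) x) &
      (forall x, (fun r => u r x) @ 0^'+ --> f x)].

Section RateLikeSolutions.
Variable P : (X -> R) -> X -> R.
Hypothesis GP : rate_like P.

Lemma solution_conj u f c : solution P u f ->
  solution (conj_op P) (fun r y => c - u r y) (fun y => c - f y).
Proof.
case=> u0 du uf; split; first by rewrite u0.
- move=> x t t0; have [dut Dut] := du x t t0.
  have /derivableP dut' := dut.
  have [dvt Dvt] := is_deriveB (is_derive_cst c t 1) dut'.
  split => //; rewrite Dvt Dut /conj_op sub0r; congr (- _).
  rewrite -(rate_shift GP _ (- c)); congr P; apply: funext => y.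
  by rewrite opprB addrC.
- by move=> x; apply: cvgB => //; exact: cvg_cst.
Qed.

Lemma solution_continuous u f x t : solution P u f -> 0 < t ->
  (fun r => u r x) @ t --> u t x.
Proof.
case=> _ du _ t0; have [dut _] := du x t t0.
exact/differentiable_continuous/derivable1_diffP.
Qed.

Lemma solution_right_continuous u f x t : solution P u f -> 0 <= t ->
  (fun r => u r x) @ t^'+ --> u t x.
Proof.
move=> S; rewrite le_eqVlt => /predU1P[<-|t0].
  by case: S => u0 _ uf; rewrite u0; exact: uf.
by apply: cvg_at_right_filter; exact: solution_continuous S t0.
Qed.

Lemma solution_not_touch_from_below u f w y tau e : solution P u f ->
  0 < tau -> 0 < e -> (forall z, P w z <= 0) -> (forall z, u tau z <= w z) ->
  u tau y = w y -> ~ \forall h \near 0^'-, u (h + tau) y <= w y + e * h.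
Proof.
case=> _ du _ tau0 e0 Pw le_w eq_w near_w; have [du_y Du_y] := du y tau tau0.
have : e <= P (u tau) y.
  rewrite -Du_y; apply: derive1_ge_at_left => //.
  by apply: filterS near_w => h; rewrite eq_w; lra.
have := le_trans (rate_max_principle GP le_w eq_w) (Pw y).
lra.
Qed.

Lemma solution_lt_barrier u f w t0 e r y : solution P u f -> 0 <= t0 ->
  (forall z, P w z <= 0) -> (forall z, u t0 z <= w z) -> 0 < e -> t0 <= r ->
  u r y < w y + e * (r - t0 + 1).
Proof.
move=> S t00 Pw ut0 e0 t0r; rewrite ltNge; apply/negP => cross.
pose b s z := w z + e * (s - t0 + 1).
have b_cvg z s : (fun s => b s z) @ s --> b s z.
  apply: cvgD; first exact: cvg_cst.
  apply: cvgM; first exact: cvg_cst.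
  by apply: cvgD; [apply: cvgB; [exact: cvg_id | exact: cvg_cst] | exact: cvg_cst].
pose g z s := u s z - b s z.
have g_right z s : t0 <= s -> g z @ s^'+ --> g z s.
  move=> t0s; apply: cvgB; first exact: solution_right_continuous S (le_trans t00 t0s).
  by apply: cvg_at_right_filter; exact: b_cvg.
have g_left z s : t0 < s -> g z @ s^'- --> g z s.
  move=> t0s; apply: cvgB; apply: cvg_at_left_filter; last exact: b_cvg.
  exact: solution_continuous S (le_lt_trans t00 t0s).
have g_t0 z : g z t0 < 0.
  rewrite /g /b subrr add0r mulr1 subr_lt0.
  by apply: le_lt_trans (ut0 z) _; rewrite ltrDl.
have [|tau [y0 [t0tau touch below before]]] := first_crossing g_right g_left g_t0 t0r.
  by exists y; rewrite subr_ge0.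
apply: (@solution_not_touch_from_below u f (b tau) y0 tau e) => //.
- exact: le_lt_trans t00 t0tau.
- by move=> z; rewrite /b (rate_shift GP).
- by move=> z; rewrite -subr_le0; exact: below.
- by apply/eqP; rewrite -subr_eq0; apply/eqP; exact: touch.
near=> h.
have h0 : h < 0 by near: h; exact: nbhs_left_lt.
have ht0 : t0 - tau < h by near: h; apply: nbhs_left_gt; rewrite subr_lt0.
have /(before y0) : t0 <= h + tau < tau by apply/andP; split; lra.
rewrite /g /b; lra.
Unshelve. all: by end_near. Qed.

Lemma solution_le_supersolution u f w t0 r y : solution P u f -> 0 <= t0 ->
  (forall z, P w z <= 0) -> (forall z, u t0 z <= w z) -> t0 <= r ->
  u r y <= w y.
Proof.
move=> S t00 Pw ut0 t0r; apply/ler_addgt0Pr => eps eps0.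
have r1 : 0 < r - t0 + 1 by rewrite ltr_wpDl // subr_ge0.
have := solution_lt_barrier y S t00 Pw ut0 (divr_gt0 eps0 r1) t0r.
by rewrite divfK ?gt_eqF // => /ltW.
Qed.

End RateLikeSolutions.

End Solutions.

Section Positivity.
Variables (R : realType) (X : finType).
Implicit Types (P : (X -> R) -> X -> R) (u : R -> X -> R) (f w : X -> R).
Implicit Types (a b r s t : R).

Lemma solution_ge_subsolution P u f w t0 r y : rate_like P -> solution P u f ->
  0 <= t0 -> (forall z, 0 <= P w z) -> (forall z, w z <= u t0 z) -> t0 <= r ->
  w y <= u r y.
Proof.
move=> GP S t00 Pw wu t0r.
have := solution_le_supersolution (rate_like_conj GP) (w := fun z => - w z) y
  (solution_conj GP 0 S) t00 _ _ t0r.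
rewrite sub0r lerN2; apply => z; last by rewrite sub0r lerN2.
rewrite /conj_op oppr_le0; under eq_fun do rewrite opprK; exact: Pw.
Qed.

Variables (P : (X -> R) -> X -> R) (u : R -> X -> R) (f : X -> R).
Hypotheses (GP : rate_like P) (S : solution P u f) (f_ge0 : forall y, 0 <= f y).

Lemma solution_ge0 r y : 0 <= r -> 0 <= u r y.
Proof.
move=> r0; apply: (solution_ge_subsolution (w := fun _ => 0)) GP S (lexx 0) _ _ r0.
  by move=> z; rewrite rate_like_cst.
by case: S => -> _ _.
Qed.

Lemma solution_gt0_persists x a b : 0 < a -> a <= b -> 0 < u a x -> 0 < u b x.
Proof.
move=> a0 ab; case: S => _ du _.
apply: (@derive1_ge_mul_gt0 _ (fun r => u r x) (P (ind R [set x]) x) a b ab)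
  => r /andP[ar _].
  exact: (du x r (lt_le_trans a0 ar)).1.
have r0 := lt_trans a0 ar.
rewrite (du x r r0).2 mulrC; apply: rate_like_ge_diag => // z.
exact/solution_ge0/ltW.
Qed.

Lemma solution_eq0_rate_le0 x a : 0 < a -> u a x = 0 -> P (u a) x <= 0.
Proof.
move=> a0 uax; case: (S) => _ du _; have [du_a <-] := du x a a0.
apply: derive1_le_at_left => //; near=> h.
have ha : 0 < h + a.
  by rewrite -ltrBlDr sub0r; near: h; apply: nbhs_left_gt; rewrite oppr_lt0.
have h0 : h + a <= a by rewrite gerDr; near: h; exact: nbhs_left_le.
suff -> : u (h + a) x = 0 by rewrite uax subrr mul0r.
apply/eqP; rewrite eq_le (solution_ge0 _ (ltW ha)) andbT leNgt.
by apply/negP => /(solution_gt0_persists ha h0); rewrite uax ltxx.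
Unshelve. all: by end_near. Qed.

Lemma solution_eq0_persists x a b : 0 < a -> a <= b -> u a x = 0 -> u b x = 0.
Proof.
move=> a0 ab uax.
pose M := \big[Order.max/0]_z u a z.
pose c := ind R [set z | u a z != 0].
have Pc z : P c z <= 0.
  apply: rate_like_support_le0 => // [y|]; first exact/solution_ge0/ltW.
  exact: solution_eq0_rate_le0.
have M0 : 0 <= M := bigmax_ge_id _ _ _ _.
have Mc_super z : P (fun y => M * c y) z <= 0.
  by rewrite (rate_homo GP) // mulr_ge0_le0.
have u_le_Mc z : u a z <= M * c z.
  rewrite /c /ind inE; case: eqP => [->|_]; rewrite ?mulr0 ?mulr1 //.
  exact: le_bigmax.
apply/eqP; rewrite eq_le solution_ge0 ?(le_trans (ltW a0) ab) // andbT.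
have := solution_le_supersolution GP x S (ltW a0) Mc_super u_le_Mc ab.
by rewrite /c /ind inE uax eqxx mulr0.
Qed.

Lemma solution_gt0 x t s : 0 < t -> 0 < s ->
  (0 < f x -> 0 < u t x) /\ (0 < u t x <-> 0 < u s x).
Proof.
move=> t0 s0.
have same a b : 0 < a -> a <= b -> (0 < u a x <-> 0 < u b x).
  move=> a0 ab; split; first exact: solution_gt0_persists.
  rewrite !lt_def !solution_ge0 ?andbT ?ltW ?(lt_le_trans a0 ab) //.
  by apply: contra_neq; exact: solution_eq0_persists.
split.
  move=> fx; case: (S) => _ _ uf.
  near (0 : R)^'+ => r.
  apply: (same r t _ _).1; near: r; [exact: nbhs_right_gt | | exact: cvgr_gt (uf x) _ fx].
  by apply: nbhs_right_le.
have [ts|st] := leP t s; first exact: same.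
by apply: iff_sym; apply: same; rewrite // ltW.
Unshelve. all: by end_near. Qed.

End Positivity.

Lemma solution_lt1 (R : realType) (X : finType) (P : (X -> R) -> X -> R)
    (u : R -> X -> R) (f : X -> R) x (t s : R) :
  rate_like P -> solution P u f -> (forall y, f y <= 1) -> 0 < t -> 0 < s ->
  (f x < 1 -> u t x < 1) /\ (u t x < 1 <-> u s x < 1).
Proof.
move=> GP S f1 t0 s0.
have := solution_gt0 (rate_like_conj GP) (solution_conj GP 1 S) _ x t0 s0.
by rewrite !subr_gt0; apply => y; rewrite subr_ge0.
Qed.

Section Semigroup.
Variables (R : realType) (X : finType) (Q : (X -> R) -> X -> R).
Variable T : R -> (X -> R) -> X -> R.
Hypothesis HT : lower_semigroup Q T.

Lemma lower_semigroup_solution f : solution Q (fun r => T r f) f.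
Proof.
have [T0 dT dT0] := HT f; split => // x.
pose q h := h^-1 * (T h f x - f x).
have : (fun h => f x + h * q h) @ 0^'+ --> f x + 0 * Q (T 0 f) x.
  apply: cvgD; first exact: cvg_cst.
  by apply: cvgM; [apply: cvg_at_right_filter; exact: cvg_id | exact: dT0].
rewrite mul0r addr0; apply: cvg_trans; apply: near_eq_cvg; near=> h.
have h0 : 0 < h by near: h; exact: nbhs_right_gt.
by rewrite /q mulrA mulfV ?gt_eqF // mul1r addrC subrK.
Unshelve. all: by end_near. Qed.

Lemma upper_solution f : rate_like Q ->
  solution (conj_op Q) (fun r => upper_of T r f) f.
Proof.
move=> GQ; have := solution_conj GQ 0 (lower_semigroup_solution (fun y => - f y)).
have -> : (fun y => 0 - - f y) = f by apply: funext => y; rewrite sub0r opprK.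
by congr solution; apply: funext => r; apply: funext => y; rewrite sub0r.
Qed.

End Semigroup.

Theorem corollary3 (R : realType) (X : finType)
    (Q : (X -> R) -> (X -> R)) (T : R -> (X -> R) -> (X -> R)) :
  lower_rate_op Q -> lower_semigroup Q T ->
  forall (A : {set X}) (x : X) (t s : R), 0 < t -> 0 < s ->
  [/\ (x \in A -> 0 < T t (ind R A) x) /\
        (0 < T t (ind R A) x <-> 0 < T s (ind R A) x),
      (x \notin A -> T t (ind R A) x < 1) /\
        (T t (ind R A) x < 1 <-> T s (ind R A) x < 1),
      (x \in A -> 0 < upper_of T t (ind R A) x) /\
        (0 < upper_of T t (ind R A) x <-> 0 < upper_of T s (ind R A) x) &
      (x \notin A -> upper_of T t (ind R A) x < 1) /\
        (upper_of T t (ind R A) x < 1 <-> upper_of T s (ind R A) x < 1)].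
Proof.
move=> HQ HT A x t s t0 s0.
have GQ := rate_like_lower_rate_op HQ.
have GQ' := rate_like_conj GQ.
have SL := lower_semigroup_solution HT (ind R A).
have SU := upper_solution HT (ind R A) GQ.
have ind_ge0 y : 0 <= ind R A y by rewrite /ind; case: ifP.
have ind_le1 y : ind R A y <= 1 by rewrite /ind; case: ifP.
have [L0 L0'] := solution_gt0 GQ SL ind_ge0 x t0 s0.
have [L1 L1'] := solution_lt1 x GQ SL ind_le1 t0 s0.
have [U0 U0'] := solution_gt0 GQ' SU ind_ge0 x t0 s0.
have [U1 U1'] := solution_lt1 x GQ' SU ind_le1 t0 s0.
rewrite /ind in L0 L1 U0 U1.
by split; split => // xA; [apply: L0 | apply: L1 | apply: U0 | apply: U1];
  rewrite ?xA ?(negbTE xA).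
Qed.
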